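(* Let $N\ge1$, $1=a_0<a_1<\cdots<a_N$, $\mathbf a=(a_1,\dots,a_N)$. Then $$m(\mathbf{a})\le \frac{a_N}{\min_{0\le k<N}(a_{k+1}-a_k)}.$$
   Context: $m(\mathbf{a})=\min\{m\in\mathbb{N}: \sum_{k=0}^{N-1}(a_k/a_N)^m<1\}$, where $a_0=1$. *)

From Stdlib Require Import Reals.
Open Scope R_scope.

Fixpoint ratio_sum (a : nat -> R) (N : nat) (m : nat) (K : nat) : R :=
  match K with
  | O => 0
  | S k => ratio_sum a N m k + (a k / a N) ^ m
  end.

Definition m_cond (a : nat -> R) (N m : nat) : Prop :=
  ratio_sum a N m N < 1.

(* m is m(a) = min { m in N : sum_{k<N} (a_k/a_N)^m < 1 } *)
Definition is_m (a : nat -> R) (N m : nat) : Prop :=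
  m_cond a N m /\ forall m', m_cond a N m' -> (m <= m')%nat.

Fixpoint min_gap (a : nat -> R) (n : nat) : R :=
  match n with
  | O => a 1%nat - a 0%nat   (* unused for n = 0 *)
  | S O => a 1%nat - a 0%nat
  | S k => Rmin (min_gap a k) (a (S k) - a k)
  end.

From Stdlib Require Import Reals Lra Lia Wf_nat Classical.
From Coquelicot Require Import Rcomplements.
Open Scope R_scope.

(* Let d = min_gap a N be the smallest gap and L = a_N.  The gaps give
   a_k <= L - (N - k) d, i.e. a_k / L <= 1 - (N - k) x with x = d / L, and by
   Bernoulli's inequality 1 - j x <= (1 - x)^j.  Hence, for every n,
   (a_k / L)^n <= y^(N - k) with y = (1 - x)^n, and the ratio sum is bounded by
   the geometric series y + y^2 + ... + y^N <= y / (1 - y).  When L < (n + 1) d,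
   Bernoulli's inequality applied to 1 / (1 - x) gives y < 1/2, so the ratio sum
   is < 1: the exponent n satisfies the defining condition of m(a).
   Taking n = floor (L / d) shows that the condition is satisfiable, so its
   least solution m(a) exists (well-ordering of nat), and m(a) <= n <= L / d. *)

Lemma bernoulli (h : R) (n : nat) : -1 <= h -> 1 + INR n * h <= (1 + h) ^ n.
Proof.
  intro Hh. induction n as [|n IH]; [simpl; lra|].
  rewrite S_INR. simpl.
  assert (0 <= INR n * (h * h)) by (apply Rmult_le_pos; [apply pos_INR | nra]).
  nra.
Qed.

Lemma one_minus_mul_le_pow (x : R) (j : nat) :
  0 <= x <= 1 -> 1 - INR j * x <= (1 - x) ^ j.
Proof.
  intro Hx. replace (1 - INR j * x) with (1 + INR j * (- x)) by ring.
  replace (1 - x) with (1 + - x) by ring. apply bernoulli. lra.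
Qed.

(* If x (n + 1) > 1 then (1 - x)^n < 1/2: with h = x / (1 - x) we have
   (1 - x)(1 + h) = 1 and (1 + h)^n >= 1 + n h > 2. *)
Lemma pow_one_minus_lt_half (x : R) (n : nat) :
  0 < x < 1 -> 1 < x * (INR n + 1) -> (1 - x) ^ n < 1 / 2.
Proof.
  intros Hx Hn.
  set (h := x / (1 - x)).
  assert (Hh : 0 <= h) by (apply Rlt_le, Rdiv_lt_0_compat; lra).
  assert (Hinv : (1 - x) * (1 + h) = 1) by (unfold h; field; lra).
  assert (Hnh : 1 < INR n * h).
  { unfold h. apply (Rmult_lt_reg_r (1 - x)); [lra|].
    replace (INR n * (x / (1 - x)) * (1 - x)) with (INR n * x) by (field; lra). lra. }
  assert (Hpow : 2 < (1 + h) ^ n) by (pose proof (bernoulli h n ltac:(lra)); lra).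
  assert (Hprod : (1 - x) ^ n * (1 + h) ^ n = 1) by (rewrite <- Rpow_mult_distr, Hinv; apply pow1).
  assert (Hy : 0 <= (1 - x) ^ n) by (apply pow_le; lra).
  nra.
Qed.

Lemma ratio_sum_geometric (a : nat -> R) (N m : nat) (y : R) :
  0 <= y <= 1 ->
  (forall k, (k < N)%nat -> (a k / a N) ^ m <= y ^ (N - k)) ->
  forall K, (K <= N)%nat -> ratio_sum a N m K * (1 - y) <= y ^ S (N - K).
Proof.
  intros Hy Hterm. induction K as [|K IH]; intros HK.
  - rewrite Rmult_0_l. apply pow_le; lra.
  - pose proof (IH ltac:(lia)) as Hprev. pose proof (Hterm K ltac:(lia)) as HK'.
    replace (N - K)%nat with (S (N - S K)) in Hprev, HK' by lia.
    simpl ratio_sum. simpl in Hprev, HK' |- *.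
    assert (Hz : 0 <= y ^ (N - S K)) by (apply pow_le; lra).
    assert (Hscaled : (a K / a N) ^ m * (1 - y) <= y * y ^ (N - S K) * (1 - y))
      by (apply Rmult_le_compat_r; lra).
    nra.
Qed.

Lemma m_cond_of_geometric (a : nat -> R) (N m : nat) (y : R) :
  0 <= y < 1 / 2 ->
  (forall k, (k < N)%nat -> (a k / a N) ^ m <= y ^ (N - k)) ->
  m_cond a N m.
Proof.
  intros Hy Hterm. unfold m_cond.
  pose proof (ratio_sum_geometric a N m y ltac:(lra) Hterm N (le_n N)) as Hsum.
  rewrite Nat.sub_diag in Hsum. simpl in Hsum. nra.
Qed.

Lemma is_m_exists (a : nat -> R) (N n : nat) :
  m_cond a N n -> exists m, is_m a N m.
Proof.
  intro Hn.
  destruct (dec_inh_nat_subset_has_unique_least_element (m_cond a N)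
              (fun k => classic (m_cond a N k)) (ex_intro _ n Hn))
    as [m [[Hm Hleast] _]].
  exists m. exact (conj Hm Hleast).
Qed.

Section GapEstimates.
Variable (N : nat) (a : nat -> R).

Lemma min_gap_le : forall n k, (k < n)%nat -> min_gap a n <= a (S k) - a k.
Proof.
  induction n as [|[|n] IH]; intros k Hk; [lia| |].
  - simpl. replace k with 0%nat by lia. lra.
  - change (min_gap a (S (S n))) with (Rmin (min_gap a (S n)) (a (S (S n)) - a (S n))).
    destruct (Nat.eq_dec k (S n)) as [->|Hne]; [apply Rmin_r|].
    eapply Rle_trans; [apply Rmin_l | apply IH; lia].
Qed.

Lemma gap_chain : forall j k, (k + j <= N)%nat ->
  a k + INR j * min_gap a N <= a (k + j).
Proof.
  induction j as [|j IH]; intros k Hkj.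
  - rewrite Nat.add_0_r. simpl. lra.
  - rewrite Nat.add_succ_r, S_INR.
    pose proof IH k ltac:(lia). pose proof min_gap_le N (k + j) ltac:(lia). lra.
Qed.

Hypothesis a0 : a 0%nat = 1.

Lemma a_ge_1 : forall k, (k <= N)%nat -> 1 + INR k * min_gap a N <= a k.
Proof. intros k Hk. rewrite <- a0. exact (gap_chain k 0 Hk). Qed.

Hypothesis increasing : forall k, (k < N)%nat -> a k < a (S k).
Hypothesis one_le_N : (1 <= N)%nat.

Lemma min_gap_pos : forall n, (1 <= n)%nat -> (n <= N)%nat -> 0 < min_gap a n.
Proof.
  induction n as [|[|n] IH]; intros H1 H2; [lia| |].
  - simpl. pose proof increasing 0 ltac:(lia). lra.
  - change (min_gap a (S (S n))) with (Rmin (min_gap a (S n)) (a (S (S n)) - a (S n))).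
    apply Rmin_glb_lt; [apply IH; lia|].
    pose proof increasing (S n) ltac:(lia). lra.
Qed.

Lemma m_cond_of_gap_bound (n : nat) :
  a N < INR (S n) * min_gap a N -> m_cond a N n.
Proof.
  intro Hn.
  set (d := min_gap a N) in *. set (L := a N) in *.
  assert (Hd : 0 < d) by (apply min_gap_pos; lia).
  assert (HL : 1 + INR N * d <= L) by (apply a_ge_1; lia).
  assert (HNr : 1 <= INR N) by (apply (le_INR 1); lia).
  assert (HLpos : 0 < L) by nra.
  set (x := d / L).
  assert (Hx : 0 < x < 1).
  { unfold x. split; [apply Rdiv_lt_0_compat; nra|].
    apply (Rmult_lt_reg_r L); [nra|]. field_simplify; nra. }
  apply (m_cond_of_geometric a N n ((1 - x) ^ n)).
  - split; [apply pow_le; lra|]. apply pow_one_minus_lt_half; [exact Hx|].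
    rewrite S_INR in Hn. unfold x.
    apply (Rmult_lt_reg_r L); [nra|]. field_simplify; nra.
  - intros k Hk. rewrite <- pow_mult, Nat.mul_comm, pow_mult. fold L.
    pose proof (gap_chain (N - k) k ltac:(lia)) as Hchain.
    replace (k + (N - k))%nat with N in Hchain by lia.
    pose proof (a_ge_1 k ltac:(lia)) as Hak.
    assert (0 <= INR k * d) by (apply Rmult_le_pos; [apply pos_INR | lra]).
    change (min_gap a N) with d in Hchain, Hak. change (a N) with L in Hchain.
    assert (Hratio : a k / L <= 1 - INR (N - k) * x).
    { apply (Rmult_le_reg_r L); [nra|]. unfold x. field_simplify; nra. }
    apply pow_incr. split; [apply Rlt_le, Rdiv_lt_0_compat; lra|].
    eapply Rle_trans; [exact Hratio | apply one_minus_mul_le_pow; lra].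
Qed.

End GapEstimates.

Theorem mainTheorem3 (N : nat) (a : nat -> R) :
  (1 <= N)%nat ->
  a 0%nat = 1 ->
  (forall k, (k < N)%nat -> a k < a (S k)) ->
  (exists m, is_m a N m) /\
  (forall m, is_m a N m -> INR m <= a N / min_gap a N).
Proof.
  intros HN Ha0 Hinc.
  assert (Hd : 0 < min_gap a N) by (apply (min_gap_pos N a Hinc); lia).
  assert (HaN : 0 < a N) by (pose proof a_ge_1 N a Ha0 N (le_n N);
                         pose proof pos_INR N; nra).
  destruct (nfloor_ex (a N / min_gap a N)) as [n [Hn_le Hn_lt]].
  { apply Rlt_le, Rdiv_lt_0_compat; lra. }
  assert (Hcond : m_cond a N n).
  { apply (m_cond_of_gap_bound N a Ha0 Hinc HN). rewrite S_INR.
    apply (Rmult_lt_reg_r (/ min_gap a N)); [apply Rinv_0_lt_compat; lra|].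
    field_simplify; lra. }
  split; [exact (is_m_exists a N n Hcond)|].
  intros m [_ Hleast].
  pose proof le_INR _ _ (Hleast n Hcond). lra.
Qed.
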